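(* In the setting described in the context, for any $s\in\{1,\dots,T\}$, any $k\in\{1,\dots,K\}$ and any $0<\beta<1$, $$\big(1-T^{\beta-1}\big)\|\mathbf{v}_k^*\|_2^2\le\|\mathbf{v}^*_{k\setminus s}\|_2^2\le\|\mathbf{v}_k^*\|_2^2$$ with probability at least $1-T^{-\beta}$.
   Context: Fixed inputs $\mathbf{x}_1,\dots,\mathbf{x}_N\in\mathbb{R}^d$. Networks $f_\theta(\mathbf{x})=\sum_{k=1}^K\mathbf{v}_k(\mathbf{w}_k^\top\mathbf{x}+b_k)_+$ with $\mathbf{w}_k\in\mathbb{S}^{d-1}$, $b_k\in\mathbb{R}$, $\mathbf{v}_k\in\mathbb{R}^T$, $K\ge N^2$. Training problem: $\min_\theta\sum_{i=1}^N\mathcal{L}(\mathbf{y}_i,f_\theta(\mathbf{x}_i))+\lambda\sum_{k=1}^K\|\mathbf{v}_k\|_2$, $\lambda>0$, with $\mathcal{L}(\mathbf{u},\mathbf{v})=\sum_t\mathcal{L}(u_t,v_t)$ separable across tasks and lower semicontinuous in its second argument. The task label vectors $\mathbf{y}_{\cdot,t}=(y_{1t},\dots,y_{Nt})$, $t=1,\dots,T$, are exchangeable random vectors. The optimal output weights $\mathbf{v}_k^*=(v^*_{k1},\dots,v^*_{kT})$ are selected by a measurable deterministic map of the labels that is permutation invariant: permuting the $T$ coordinates of all labels permutes the coordinates of all selected $\mathbf{v}_k^*$ in the same way. $\mathbf{v}^*_{k\setminus s}$ denotes $\mathbf{v}_k^*$ with its $s$-th entry removed. *)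

From HB Require Import structures.
From mathcomp Require Import all_boot all_order all_algebra perm.
From mathcomp Require Import all_classical all_reals all_analysis.
Set Implicit Arguments. Unset Strict Implicit. Unset Printing Implicit Defensive.
Import Order.TTheory GRing.Theory Num.Theory.
Local Open Scope classical_set_scope.
Local Open Scope ring_scope.

(** Labels: [y : labels R N T], with [y t i] = y_{i t}
    (task t, sample i); so [y t] is the task label vector y_{.,t}. *)
Definition labels (R : realType) (N T : nat) := 'I_T -> 'I_N -> R.

Definition perm_labels (R : realType) (N T : nat) (sigma : {perm 'I_T})
  (y : labels R N T) : labels R N T := fun t => y (sigma t).

(** sigma-algebra on the label space R^{N x T} generated by the coordinates
    (= product Borel sigma-algebra). *)
Definition label_measurable (R : realType) (N T : nat) : set (set (labels R N T)) :=
  <<s [set A | exists (t : 'I_T) (i : 'I_N) (B : set R),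
                 measurable B /\ A = [set y | B (y t i)]] >>.

Record params (R : realType) (d K T : nat) := Params {
  pw : 'I_K -> 'I_d -> R ;
  pb : 'I_K -> R ;
  pv : 'I_K -> 'I_T -> R }.

Definition feasible (R : realType) (d K T : nat) (th : params R d K T) : Prop :=
  forall k, \sum_(j < d) pw th k j ^+ 2 = 1.

Definition net (R : realType) (d K T : nat) (th : params R d K T)
  (x : 'I_d -> R) (t : 'I_T) : R :=
  \sum_(k < K) pv th k t * Num.max 0 (\sum_(j < d) pw th k j * x j + pb th k).

Definition norm2 (R : realType) (T : nat) (v : 'I_T -> R) : R :=
  Num.sqrt (\sum_(t < T) v t ^+ 2).

(** Training objective, with the separable loss
    L(u, v) = sum_t loss u_t v_t. *)
Definition objective (R : realType) (d N K T : nat) (loss : R -> R -> R)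
  (lambda : R) (x : 'I_N -> 'I_d -> R) (y : labels R N T)
  (th : params R d K T) : R :=
  \sum_(i < N) \sum_(t < T) loss (y t i) (net th (x i) t)
  + lambda * \sum_(k < K) norm2 (pv th k).

From HB Require Import structures.
From mathcomp Require Import all_boot all_order all_algebra perm.
From mathcomp Require Import all_classical all_reals all_analysis.
From mathcomp Require Import measurable_realfun lra.
Import Order.TTheory GRing.Theory Num.Theory numFieldNormedType.Exports.
Set Implicit Arguments. Unset Strict Implicit. Unset Printing Implicit Defensive.
Local Open Scope classical_set_scope.
Local Open Scope ring_scope.

(** With [c = T^(beta-1)], call a task [t] large for [v] when
    [v_t^2 > c ||v||^2]; the claimed inequalities fail exactly when [s] is
    large.  At most [1/c] coordinates of a vector can be large, so
    integrating the number of large tasks gives [sum_t P(t large) <= 1/c].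
    Exchangeability of the tasks together with the permutation invariance of
    the selection makes all these probabilities equal, so
    [P(s large) <= 1/(c T) = T^(-beta)]. *)

Definition large_coord (R : realFieldType) (T : nat) (c : R) (v : 'I_T -> R)
    (t : 'I_T) : bool :=
  c * \sum_(u < T) v u ^+ 2 < v t ^+ 2.

Section LargeCoordinates.
Variables (R : realFieldType) (T : nat).
Implicit Types (c : R) (v : 'I_T -> R).

Lemma large_coord_perm c v (sigma : {perm 'I_T}) t :
  large_coord c (fun u => v (sigma u)) t = large_coord c v (sigma t).
Proof. by rewrite /large_coord [in RHS](reindex_perm sigma). Qed.

Lemma card_large_coord_le c v : 0 < c ->
  \sum_(t < T) (large_coord c v t)%:R <= c^-1.
Proof.
move=> c_gt0; set V := \sum_(u < T) v u ^+ 2.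
have coord_le t : v t ^+ 2 <= V.
  by rewrite /V (bigD1 t) //= lerDl sumr_ge0 // => u _; exact: sqr_ge0.
have [V0|V_neq0] := eqVneq V 0.
  rewrite big1 ?invr_ge0 ?ltW // => t _.
  by rewrite /large_coord -/V V0 mulr0 ltNge -V0 coord_le.
have V_gt0 : 0 < V by rewrite lt_def V_neq0 sumr_ge0 // => u _; exact: sqr_ge0.
have weighted : (\sum_(t < T) (large_coord c v t)%:R) * (c * V) <= V.
  rewrite mulr_suml; apply: ler_sum => t _.
  by rewrite /large_coord; case: ltP => [/ltW|_]; rewrite ?mul1r ?mul0r ?sqr_ge0.
by rewrite -[c^-1]mul1r ler_pdivlMr // -(ler_pM2r V_gt0) mul1r -mulrA.
Qed.

Lemma large_coordN_iff c v s :
  ~~ large_coord c v s <->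
  (1 - c) * \sum_(t < T) v t ^+ 2 <= \sum_(t < T | t != s) v t ^+ 2
  /\ \sum_(t < T | t != s) v t ^+ 2 <= \sum_(t < T) v t ^+ 2.
Proof.
rewrite /large_coord -leNgt (bigD1 s) //=.
have := sqr_ge0 (v s); move: (v s ^+ 2) (\sum_(t < T | t != s) _) => a b a_ge0.
by split=> [|[]]; lra.
Qed.

End LargeCoordinates.

Section BoundedOverlap.
Variables (d : measure_display) (Omega : measurableType d) (R : realType).
Variables (P : probability Omega R) (T : nat) (E : 'I_T -> set Omega).
Hypothesis mE : forall t, measurable (E t).

Lemma sum_prob_le_overlap (m : R) :
  (forall w, \sum_(t < T) \1_(E t) w <= m) -> (\sum_(t < T) P (E t) <= m%:E)%E.
Proof.
move=> overlap.
have mI t : measurable_fun setT (EFin \o (\1_(E t) : Omega -> R)).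
  by apply/measurable_EFinP; exact: measurable_indic.
have I_ge0 t w : setT w -> (0 <= (\1_(E t) w : R)%:E)%E.
  by move=> _; rewrite lee_fin indicE ler0n.
have -> : (\sum_(t < T) P (E t) = \int[P]_w \sum_(t < T) (\1_(E t) w)%:E)%E.
  rewrite ge0_integral_sum //; apply: eq_bigr => t _.
  by rewrite integral_indic // setIT.
rewrite -[m%:E]mule1 -(probability_setT P) -integral_cst //.
apply: ge0_le_integral => //.
- by move=> w _; apply: sume_ge0 => t _; exact: I_ge0.
- by apply: emeasurable_sum => t; exact: mI.
- by move=> w _; rewrite sumEFin lee_fin.
Qed.

Lemma prob_le_equiprobable_overlap (s : 'I_T) (m : R) :
  (forall t, P (E t) = P (E s)) ->
  (forall w, \sum_(t < T) \1_(E t) w <= m) -> (P (E s) <= (m / T%:R)%:E)%E.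
Proof.
move=> equi /sum_prob_le_overlap.
have T_gt0 : (0 : R) < T%:R by rewrite ltr0n (leq_ltn_trans (leq0n s)).
rewrite (eq_bigr _ (fun t _ => equi t)).
have /fineK <- := fin_num_measure P _ (mE s).
by rewrite sumEFin sumr_const card_ord !lee_fin ler_pdivlMr // mulr_natr.
Qed.

End BoundedOverlap.

Definition label_coord_sets (R : realType) (N T : nat) : set (set (labels R N T)) :=
  [set A | exists (t : 'I_T) (i : 'I_N) (B : set R),
                 measurable B /\ A = [set y | B (y t i)]].

Definition label_space (R : realType) (N T : nat) :=
  g_sigma_algebraType (@label_coord_sets R N T).

Lemma label_measurable_large_coord (R : realType) (N T : nat)
    (f : labels R N T -> 'I_T -> R) (c : R) (t : 'I_T) :
  (forall u B, measurable B -> label_measurable [set y | B (f y u)]) ->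
  label_measurable [set y | large_coord c (f y) t].
Proof.
move=> mf.
have mfu u : measurable_fun setT (fun y : label_space R N T => f y u).
  by move=> _ B mB; rewrite setTI; exact: mf.
have mlarge : measurable_fun setT
    (fun y : label_space R N T => large_coord c (f y) t).
  apply: measurable_fun_ltr; last exact: measurable_funX.
  apply: measurable_funM; first exact: measurable_cst.
  by apply: measurable_sum => u; exact: measurable_funX.
by have := mlarge measurableT [set true] I; rewrite setTI preimage_true.
Qed.

Lemma powR_sub1_inv_div (R : realType) (x b : R) : 0 < x ->
  (x `^ (b - 1))^-1 / x = x `^ (- b).
Proof.
move=> x_gt0; rewrite -powRN -(powR_inv1 (ltW x_gt0)) -powRD.
  by congr (_ `^ _); lra.
by rewrite (gt_eqF x_gt0) implybT.
Qed.

Theorem lemma2 (R : realType) (d N K T : nat)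
  (x : 'I_N -> 'I_d -> R)
  (loss : R -> R -> R) (lambda : R)
  (dO : measure_display) (Omega : measurableType dO)
  (P : probability Omega R)
  (Y : Omega -> labels R N T)
  (sel : labels R N T -> params R d K T)
  (s : 'I_T) (k : 'I_K) (beta : R) :
  (N ^ 2 <= K)%N ->
  0 < lambda ->
  (forall u : R, lower_semicontinuous (fun v : R => (loss u v)%:E)) ->
  (* Y is a random element of the label space *)
  (forall A, label_measurable A -> measurable (Y @^-1` A)) ->
  (* the task label vectors y_{.,1}, ..., y_{.,T} are exchangeable *)
  (forall (sigma : {perm 'I_T}) A, label_measurable A ->
      P (Y @^-1` A) = P ((fun w => perm_labels sigma (Y w)) @^-1` A)) ->
  (* sel y is an optimal solution of the training problem for labels y *)
  (forall y, feasible (sel y) /\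
     forall th : params R d K T, feasible th ->
       objective loss lambda x y (sel y) <= objective loss lambda x y th) ->
  (* the selection of the output weights is measurable *)
  (forall (k' : 'I_K) (t : 'I_T) (B : set R), measurable B ->
      label_measurable [set y | B (pv (sel y) k' t)]) ->
  (* and permutation invariant *)
  (forall (sigma : {perm 'I_T}) y (k' : 'I_K) (t : 'I_T),
      pv (sel (perm_labels sigma y)) k' t = pv (sel y) k' (sigma t)) ->
  0 < beta < 1 ->
  ((1 - T%:R `^ (- beta))%:E <=
  P [set w | let v := pv (sel (Y w)) k in (
             (1 - T%:R `^ (beta - 1)) * \sum_(t < T) v t ^+ 2
               <= \sum_(t < T | t != s) v t ^+ 2
             /\ \sum_(t < T | t != s) v t ^+ 2 <= \sum_(t < T) v t ^+ 2)%R])%E.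
Proof.
move=> _ _ _ mY exY _ mv equiv _.
have T_gt0 : (0 : R) < T%:R by rewrite ltr0n (leq_ltn_trans (leq0n s)).
set c := T%:R `^ (beta - 1).
have c_gt0 : 0 < c by apply: powR_gt0.
pose A t := [set y : labels R N T | large_coord c (pv (sel y) k) t].
have mA t : label_measurable (A t) := label_measurable_large_coord c t (mv k).
have equiprobable t : P (Y @^-1` A t) = P (Y @^-1` A s).
  rewrite (exY (tperm s t) _ (mA s)); congr (P _); apply/seteqP; split=> w;
    by rewrite /A /= (funext (equiv _ _ k)) large_coord_perm tpermL.
have PAs : (P (Y @^-1` A s) <= (T%:R `^ (- beta))%:E)%E.
  rewrite -(powR_sub1_inv_div _ T_gt0) -/c.
  apply: (prob_le_equiprobable_overlap (E := fun t => Y @^-1` A t)) => // [t|w].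
    exact: mY.
  under eq_bigr do rewrite indicE mem_setE.
  exact: card_large_coord_le.
rewrite (_ : [set w | _] = ~` (Y @^-1` A s)); last first.
  apply/seteqP; split=> w /=; rewrite -/c.
  - by move=> /large_coordN_iff/negP.
  - by move=> /negP/large_coordN_iff.
rewrite probability_setC; last exact: mY.
by rewrite (EFinB 1); apply: leeB.
Qed.
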